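(* Let $r\ge1$ and let $\tau,\tau'$ be permutations of $F^r$ fixing $\mathbf 0$, such that $S_\tau$ and $S_{\tau'}$ are transitive codes of length $2^{r+1}$. Then there exist a vector $x\in F^{2^{r+1}}$ and a permutation $\pi$ of coordinates with $x+\pi(S_\tau)=S_{\tau'}$ if and only if there exists a permutation $\pi'$ of the points with $SQS_\tau\sim_{\pi'}SQS_{\tau'}$.
   Context: $F=\mathrm{GF}(2)$, $\mathbf 0$ is the all-zero vector. Index the coordinates of $F^{2^r}$ by the vectors of $F^r$; $e_a$ is the unit vector at position $a$. $\mathcal H=\{x\in F^{2^r}:\sum_{a:x_a=1}a=\mathbf 0,\ \mathrm{wt}(x)\text{ even}\}$ is the extended Hamming code. For $x,y\in F^{2^r}$, $x|y$ is the concatenation and $C\times D=\{x|y:x\in C,y\in D\}$. $S_\tau=\bigcup_{a\in F^r}(\mathcal H+e_a+e_{\mathbf 0})\times(\mathcal H+e_{\tau(a)}+e_{\tau(\mathbf 0)})\subseteq F^{2^{r+1}}$. Coordinate positions of $F^{2^{r+1}}$ are denoted $(\{a\},\emptyset)$ (first half) and $(\emptyset,\{a\})$ (second half); $(X,Y)$ denotes the set of positions $\{(\{x\},\emptyset):x\in X\}\cup\{(\emptyset,\{y\}):y\in Y\}$. $SQS_\tau$ consists of the quadruples $Q_0=\{(\{a,b,c,d\},\emptyset): a,b,c,d \text{ pairwise distinct}, a+b+c+d=\mathbf 0\}$, $Q_1=\{(\emptyset,\{a,b,c,d\}): \text{same condition}\}$, $Q_\tau=\{(\{a,c\},\{b,d\}):\tau(a+c)=b+d\neq\mathbf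 0\}$. $SQS_\tau\sim_{\pi'}SQS_{\tau'}$ means $\pi'$ maps the quadruples of $SQS_\tau$ onto those of $SQS_{\tau'}$. Permutations act on vectors by $\pi(y)_i=y_{\pi^{-1}(i)}$. A code $C$ is transitive if the group $\{y\mapsto x+\pi(y)\}$ stabilizer $\mathrm{Aut}(C)$ of $C$ has a subgroup acting transitively on $C$. *)

From mathcomp Require Import all_boot all_order all_algebra all_fingroup.
Set Implicit Arguments. Unset Strict Implicit. Unset Printing Implicit Defensive.
Import GRing.Theory.
Local Open Scope ring_scope.

Notation V r := ('rV['F_2]_r).
(* words of length 2^r: coordinates indexed by F^r *)
Notation W r := ({ffun V r -> 'F_2}).
(* coordinate positions of F^{2^{r+1}}: inl a = ({a},∅), inr a = (∅,{a}) *)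
Notation P r := ((V r + V r)%type).
Notation W2 r := ({ffun P r -> 'F_2}).

Definition unitv r (a : V r) : W r := [ffun b => (b == a)%:R].
Definition wt r (x : W r) : nat := #|[set a | x a != 0]|.

Definition Ham r : {set W r} :=
  [set x : W r | ((\sum_(a | x a == 1) (a : 'rV['F_2]_r)) == 0) && ~~ odd (wt x)].

Definition coset r (C : {set W r}) (v : W r) : {set W r} := [set (c : W r) + v | c in C].

Definition concat r (x y : W r) : W2 r :=
  [ffun i : P r => match i with inl a => x a | inr b => y b end].

Definition Sc r (tau : {perm V r}) : {set W2 r} :=
  \bigcup_(a : V r)
    [set concat x y | x in coset (Ham r) (unitv a + unitv 0),
                      y in coset (Ham r) (unitv (tau a) + unitv (tau 0))].

Definition permw r (pi : {perm P r}) (y : W2 r) : W2 r := [ffun i => y ((pi^-1)%g i)].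

Definition isoms r : {set {perm W2 r}} :=
  [set g : {perm W2 r} | [exists x : W2 r, exists pi : {perm P r},
                          [forall y, g y == x + permw pi y]]].
Definition Aut r (C : {set W2 r}) : {set {perm W2 r}} :=
  [set g in isoms r | g @: C == C].
Definition transitive_code r (C : {set W2 r}) : Prop :=
  exists G : {group {perm W2 r}}, G \subset Aut C /\ [transitive G, on C | 'P].

Definition SQS r (tau : {perm V r}) : {set {set P r}} :=
  [set Q : {set P r} |
    [exists a : V r, exists b : V r, exists c : V r, exists d : V r,
      ([&& a != b, a != c, a != d, b != c, b != d, c != d & a + b + c + d == 0]
         && ((Q == [set inl a; inl b; inl c; inl d])
             || (Q == [set inr a; inr b; inr c; inr d])))
      || ((tau (a + c) == b + d) && (b + d != 0)
          && (Q == [set inl a; inl c; inr b; inr d]))]].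

Definition sqs_equiv r (pi' : {perm P r}) (S1 S2 : {set {set P r}}) : Prop :=
  [set pi' @: (Q : {set P r}) | Q in S1] = S2.

From Pilot Require Import Defs.
From mathcomp Require Import all_boot all_order all_algebra all_fingroup zify.
Import GRing.Theory.
Local Open Scope ring_scope.
Set Implicit Arguments. Unset Strict Implicit. Unset Printing Implicit Defensive.

(* Forward direction: the blocks of SQS_tau are exactly the supports of the
   weight-4 words of S_tau, so a coordinate permutation carrying S_tau onto
   S_tau' carries SQS_tau onto SQS_tau'; transitivity of S_tau first lets an
   automorphism absorb the translation x.
   Backward direction: let rho carry SQS_tau onto SQS_tau'.  If rho maps each
   half of the coordinates onto a half, its restrictions to the halves send the
   Hamming quadruples {a,b,c,d} (a+b+c+d = 0) to Hamming quadruples, hence are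
   affine, and the mixed blocks force them to intertwine tau and tau'; this is
   exactly what rho needs to map S_tau into S_tau' (up to the exchange of the
   halves, which maps S_tau onto S_(tau^-1)).  Otherwise the halves colouring
   of SQS_tau' pulls back to a 2-colouring of the points of SQS_tau that splits
   the first half.  Every block meets each colour class evenly, so the colour
   differences give nonzero linear forms g, g' on the two halves with
   g = g' o tau, and exchanging colour-1 pairs between mixed blocks yields
   tau (s + t) = tau s + tau t whenever g s <> g t: tau is linear, and so is
   tau' by symmetry.  Then S_tau is spanned by the indicator words of its
   blocks, which rho maps to blocks of SQS_tau'. *)

Section Char2.

Variable M : zmodType.
Hypothesis addxx : forall x : M, x + x = 0.

Lemma char2_opp (x : M) : - x = x.
Proof. by apply/esym/eqP; rewrite -addr_eq0 addxx. Qed.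

Lemma char2_add_eq0 (x y : M) : (x + y == 0) = (x == y).
Proof. by rewrite addr_eq0 char2_opp. Qed.

Lemma char2_addKr (x y : M) : x + (x + y) = y.
Proof. by rewrite addrA addxx add0r. Qed.

End Char2.

Lemma F2P (k : 'F_2) : k = 0 \/ k = 1.
Proof. by case: k => [[|[|n]]] // ?; [left|right]; apply: val_inj. Qed.

Lemma addxx_F2 (k : 'F_2) : k + k = 0.
Proof. exact: (addrr_pchar2 (pchar_Fp (isT : prime 2))). Qed.

Lemma natr_F2 (n : nat) : n%:R = (odd n)%:R :> 'F_2.
Proof.
elim: n => [|n IHn] //; rewrite mulrS IHn /=.
by case: (odd n); rewrite ?addr0 ?addxx_F2.
Qed.

Lemma addvv_F2 (U : lmodType 'F_2) (v : U) : v + v = 0.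
Proof. by rewrite -mulr2n -scaler_nat (pchar_Fp_0 (isT : prime 2)) scale0r. Qed.

Lemma addww_F2 (T : finType) (x : {ffun T -> 'F_2}) : x + x = 0.
Proof. by apply/ffunP => i; rewrite !ffunE addxx_F2. Qed.

Lemma natrF2_inj (b c : bool) : b%:R = c%:R :> 'F_2 -> b = c.
Proof. by case: b; case: c => // /eqP; rewrite ?oner_eq0 // eq_sym oner_eq0. Qed.

Section ElementaryAbelian2Maps.

Variables M N : zmodType.
Hypotheses (addxxM : forall x : M, x + x = 0) (addxxN : forall y : N, y + y = 0).

Lemma affine_of_quads (f : M -> N) :
  (forall a b, a != 0 -> b != 0 -> a != b -> f 0 + f a + f b + f (a + b) = 0) ->
  forall a b, f (a + b) + f 0 = (f a + f 0) + (f b + f 0).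
Proof.
move=> quad0 a b.
have [->|a0] := eqVneq a 0; first by rewrite !add0r addxxN add0r.
have [->|b0] := eqVneq b 0; first by rewrite !addr0 addxxN addr0.
have [->|ab] := eqVneq a b; first by rewrite !addxxM !addxxN.
have /eqP := quad0 a b a0 b0 ab; rewrite (char2_add_eq0 addxxN) => /eqP<-.
by rewrite [f 0 + f a]addrC -addrA.
Qed.

Lemma additive_of_split (g : M -> 'F_2) (f : M -> N) :
  {morph g : a b / a + b} -> (exists s0, g s0 = 1) ->
  (forall s t, g s = 1 -> g t = 0 -> f (s + t) = f s + f t) ->
  {morph f : a b / a + b}.
Proof.
(* When g s = g t, split s + t through s0 + s (if g s = 0) or write t = s + (s + t). *)
move=> gD [s0 gs0] split s t.
case: (F2P (g s)) => gs; case: (F2P (g t)) => gt.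
- have gs0s : g (s0 + s) = 1 by rewrite gD gs0 gs addr0.
  have gst : g (s + t) = 0 by rewrite gD gs gt addr0.
  apply: (@addrI _ (f s0)); rewrite -split // addrA split //.
  by rewrite split // addrA.
- by rewrite addrC split // addrC.
- exact: split.
have gst : g (s + t) = 0 by rewrite gD gs gt addxx_F2.
have := split s (s + t) gs gst; rewrite (char2_addKr addxxM) => ->.
by rewrite (char2_addKr addxxN).
Qed.

End ElementaryAbelian2Maps.

Lemma uniq4_andE (T : eqType) (a b c d : T) (R : bool) :
  [&& a != b, a != c, a != d, b != c, b != d, c != d & R] = uniq [:: a; b; c; d] && R.
Proof. by rewrite /= !inE !negb_or andbT -!andbA. Qed.

Lemma card_set4 (T : finType) (a b c d : T) :
  uniq [:: a; b; c; d] -> #|[set a; b; c; d]| = 4%N.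
Proof.
move=> U; rewrite (@eq_card _ _ (mem [:: a; b; c; d])); first exact/card_uniqP.
by move=> x; rewrite !inE -!orbA.
Qed.

Lemma uniq_set4 (T : finType) (a b c d : T) :
  #|[set a; b; c; d]| = 4%N -> uniq [:: a; b; c; d].
Proof.
move=> H; apply/card_uniqP; rewrite /= -H.
by apply: eq_card => x; rewrite !inE -!orbA.
Qed.

Lemma sum_set4 (T : finType) (M : nmodType) (F : T -> M) (a b c d : T) :
  uniq [:: a; b; c; d] -> \sum_(i in [set a; b; c; d]) F i = F a + F b + F c + F d.
Proof.
move=> U; rewrite (eq_bigl (mem [:: a; b; c; d])) => [|x]; last by rewrite !inE -!orbA.
by rewrite -big_uniq //= !big_cons big_nil addr0 !addrA.
Qed.

Lemma sum_set2 (T : finType) (M : nmodType) (F : T -> M) (a b : T) :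
  a != b -> \sum_(i in [set a; b]) F i = F a + F b.
Proof. by move=> ab; rewrite big_setU1 ?big_set1 ?inE. Qed.

Lemma card_set4P (T : finType) (A : {set T}) : #|A| = 4%N ->
  exists a b c d, uniq [:: a; b; c; d] /\ A = [set a; b; c; d].
Proof.
rewrite cardE => size4; have := enum_uniq (mem A); have memA := mem_enum (mem A).
move: size4 memA; case: (enum A) => [|a [|b [|c [|d [|e s]]]]] // _ memA U.
by exists a, b, c, d; split => //; apply/setP => x; rewrite -memA !inE -!orbA.
Qed.

Lemma pick3 (T : finType) (A : {set T}) : (3 <= #|A|)%N ->
  exists a b e, uniq [:: a; b; e] /\ {subset [:: a; b; e] <= A}.
Proof.
rewrite cardE => size3; have := enum_uniq (mem A); have memA := mem_enum (mem A).
move: size3 memA; case: (enum A) => [|a [|b [|e s]]] // _ memA /= /and3P[].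
rewrite !inE !negb_or => /and3P[ab ae _] /andP[be _] _.
exists a, b, e; split; first by rewrite /= !inE !negb_or ab ae be.
by move=> x; rewrite -memA !inE => /or3P[] /eqP->; rewrite eqxx ?orbT.
Qed.

Lemma imset_set4 (T T' : finType) (f : T -> T') (a b c d : T) :
  f @: [set a; b; c; d] = [set f a; f b; f c; f d].
Proof. by rewrite !imsetU !imset_set1. Qed.

Lemma set4C23 (T : finType) (x1 x2 x3 x4 : T) : [set x1; x2; x3; x4] = [set x1; x3; x2; x4].
Proof. by apply/setP => x; rewrite !inE; do 3!case: (x == _). Qed.

Lemma mem_imset_perm (T : finType) (p : {perm T}) (A : {set T}) x :
  (x \in p @: A) = ((p^-1)%g x \in A).
Proof. by rewrite -{1}(permKV p x) mem_imset //; apply: perm_inj. Qed.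

Lemma imset_permK (T : finType) (p : {perm T}) (A : {set T}) : (p^-1)%g @: (p @: A) = A.
Proof. by apply/setP => x; rewrite !mem_imset_perm invgK permK. Qed.

Lemma imset_permKV (T : finType) (p : {perm T}) (A : {set T}) : p @: ((p^-1)%g @: A) = A.
Proof. by apply/setP => x; rewrite !mem_imset_perm invgK permKV. Qed.

Definition indw (T : finType) (A : {set T}) : {ffun T -> 'F_2} := [ffun i => (i \in A)%:R].

Definition supp (T : finType) (x : {ffun T -> 'F_2}) : {set T} := [set i | x i != 0].

Lemma indw_supp (T : finType) (x : {ffun T -> 'F_2}) : indw (supp x) = x.
Proof. by apply/ffunP => i; rewrite !ffunE inE; case: (F2P (x i)) => ->. Qed.

Lemma supp_add (T : finType) (x y : {ffun T -> 'F_2}) :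
  supp (x + y) = (supp x :\: supp y) :|: (supp y :\: supp x).
Proof.
apply/setP => i; rewrite !inE ffunE.
by case: (F2P (x i)) => ->; case: (F2P (y i)) => ->; rewrite ?addxx_F2.
Qed.

Lemma supp_indw (T : finType) (A : {set T}) : supp (indw A) = A.
Proof. by apply/setP => i; rewrite !inE ffunE; case: (i \in A). Qed.

Lemma weight_add_quad (T : finType) (x : {ffun T -> 'F_2}) (Q : {set T}) (p1 p2 p3 : T) :
  #|Q| = 4%N -> uniq [:: p1; p2; p3] -> {subset [:: p1; p2; p3] <= supp x :&: Q} ->
  (#|supp (x + indw Q)%R| < #|supp x|)%N.
Proof.
move=> Q4 U sub; have three : (3 <= #|supp x :&: Q|)%N.
  by rewrite -[3%N]/(size [:: p1; p2; p3]) -(card_uniqP U); apply/subset_leq_card/subsetP.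
have inQ : (#|supp x :&: Q| <= 4)%N by rewrite -Q4 subset_leq_card ?subsetIr.
have inS : (#|supp x :&: Q| <= #|supp x|)%N by rewrite subset_leq_card ?subsetIl.
rewrite supp_add supp_indw; apply: leq_ltn_trans (leq_card_setU _ _) _.
by rewrite !cardsD [Q :&: _]setIC Q4; lia.
Qed.

Section Syndromes.

Variable r : nat.
Implicit Types (x y : W r) (S : {set V r}) (tau : {perm V r}).

Definition syn x : V r := \sum_a x a *: a.
Definition par x : 'F_2 := \sum_a x a.

Lemma synD x y : syn (x + y) = syn x + syn y.
Proof. by rewrite /syn -big_split; apply: eq_bigr => a _; rewrite ffunE scalerDl. Qed.

Lemma parD x y : par (x + y) = par x + par y.
Proof. by rewrite /par -big_split; apply: eq_bigr => a _; rewrite ffunE. Qed.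

Lemma syn_indw S : syn (indw S) = \sum_(a in S) a.
Proof.
rewrite /syn [RHS]big_mkcond; apply: eq_bigr => a _.
by rewrite ffunE; case: (a \in S); rewrite ?scale1r ?scale0r.
Qed.

Lemma par_indw S : par (indw S) = (odd #|S|)%:R.
Proof.
rewrite /par -natr_F2 -sum1_card natr_sum [RHS]big_mkcond.
by apply: eq_bigr => a _; rewrite ffunE; case: (a \in S).
Qed.

Lemma indw1 (a : V r) : indw [set a] = unitv a.
Proof. by apply/ffunP => b; rewrite !ffunE inE. Qed.

Lemma syn_unitv (a : V r) : syn (unitv a) = a.
Proof. by rewrite -indw1 syn_indw big_set1. Qed.

Lemma par_unitv (a : V r) : par (unitv a) = 1.
Proof. by rewrite -indw1 par_indw cards1. Qed.

Lemma mem_Ham x : (x \in Ham r) = (syn x == 0) && (par x == 0).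
Proof.
rewrite inE -[in RHS](indw_supp x) syn_indw par_indw; congr (_ && _).
  by congr (_ == 0); apply: eq_bigl => a; rewrite inE; case: (F2P (x a)) => ->.
by rewrite /wt; case: (odd _).
Qed.

Lemma mem_coset_Ham (v x : W r) :
  (x \in Defs.coset (Ham r) v) = (syn x == syn v) && (par x == par v).
Proof.
have addK y : y + v + v = y by rewrite -addrA addww_F2 addr0.
apply/imsetP/andP => [[y] | [/eqP Hs /eqP Hp]].
  by rewrite mem_Ham => /andP[/eqP sy /eqP py] ->; rewrite synD parD sy py !add0r !eqxx.
exists (x + v); last by rewrite addK.
by rewrite mem_Ham synD parD Hs Hp addvv_F2 addxx_F2 !eqxx.
Qed.

Definition side (k : bool) (a : V r) : P r := if k then inl a else inr a.
Definition half (k : bool) (c : W2 r) : W r := [ffun a => c (side k a)].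

Lemma concat_half (c : W2 r) : concat (half true c) (half false c) = c.
Proof. by apply/ffunP => -[a|a]; rewrite !ffunE. Qed.

Lemma half_concat k x y : half k (concat x y) = if k then x else y.
Proof. by apply/ffunP => a; case: k; rewrite !ffunE. Qed.

Lemma mem_Sc tau (c : W2 r) : tau 0 = 0 ->
  (c \in Sc tau) = [&& par (half true c) == 0, par (half false c) == 0
                     & tau (syn (half true c)) == syn (half false c)].
Proof.
move=> tau0; rewrite -[c in LHS]concat_half.
set x := half true c; set y := half false c.
have mem_coset_e (a : V r) z :
    (z \in Defs.coset (Ham r) (unitv a + unitv 0)) = (syn z == a) && (par z == 0).
  by rewrite mem_coset_Ham synD parD !syn_unitv !par_unitv addr0 addxx_F2.
apply/bigcupP/and3P => [[a _ /imset2P[x' y' Hx' Hy' E]] | [/eqP px /eqP py /eqP sxy]].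
  have [-> ->] : x = x' /\ y = y'.
    by split; [move/(congr1 (half true)): E | move/(congr1 (half false)): E];
      rewrite !half_concat.
  move: Hx' Hy'; rewrite tau0 !mem_coset_e.
  by move=> /andP[/eqP-> /eqP->] /andP[/eqP-> /eqP->].
exists (syn x) => //; apply/imset2P; exists x y => //.
  by rewrite mem_coset_e px !eqxx.
by rewrite tau0 mem_coset_e py sxy !eqxx.
Qed.

End Syndromes.

Lemma syn_morph r (l : V r -> V r) (x : W r) :
  {morph l : a b / a + b} -> l (syn x) = \sum_a x a *: l a.
Proof.
move=> lD; have l0 : l 0 = 0 by apply: (@addrI _ (l 0)); rewrite -lD !addr0.
rewrite /syn (big_morph l lD l0); apply: eq_bigr => a _.
by case: (F2P (x a)) => ->; rewrite ?scale0r ?scale1r.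
Qed.

Lemma sum_affine r (h : V r -> V r) (x : W r) :
  (forall a b, h (a + b) + h 0 = (h a + h 0) + (h b + h 0)) -> par x = 0 ->
  \sum_a x a *: h a = h (syn x) + h 0.
Proof.
move=> hA px; have /= -> := @syn_morph _ (fun a => h a + h 0) x hA.
rewrite [RHS](eq_bigr (fun a => x a *: h a + x a *: h 0)) => [|a _]; last exact: scalerDr.
by rewrite big_split /= -scaler_suml -/(par x) px scale0r addr0.
Qed.

Lemma uniq_0_ab r (a b : V r) : a != 0 -> b != 0 -> a != b -> uniq [:: 0; a; b; a + b].
Proof.
move=> a0 b0 ab; rewrite /= !inE !negb_or ![0 == _]eq_sym a0 b0 /=.
rewrite (char2_add_eq0 (@addvv_F2 _)) ab -{1}[a]addr0 (inj_eq (addrI a)) [0 == _]eq_sym b0.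
by rewrite -{1}[b]add0r (inj_eq (addIr b)) [0 == _]eq_sym a0.
Qed.

Lemma uniq_abe r (a b e : V r) : uniq [:: a; b; e] -> uniq [:: a; b; e; a + b + e].
Proof.
rewrite /= !inE !negb_or !andbT => /andP[/andP[ab ae] be]; rewrite ab ae be /=.
have addK (x y : V r) : (x + y == x) = (y == 0).
  by rewrite -[X in _ == X]addr0 (inj_eq (addrI x)).
rewrite ![_ == a + b + e]eq_sym -addrA addK (char2_add_eq0 (@addvv_F2 _)) be /=.
rewrite addrCA addK (char2_add_eq0 (@addvv_F2 _)) ae /=.
by rewrite addrA addrC addK (char2_add_eq0 (@addvv_F2 _)) eq_sym ab.
Qed.

Definition half_of r (p : P r) : bool := if p is inl _ then true else false.

Lemma uniq_cross r (a c b d : V r) :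
  uniq ([:: inl a; inl c; inr b; inr d] : seq (P r)) = (a != c) && (b != d).
Proof. by rewrite /= !inE !eqE /= orbF andbT. Qed.

Section Blocks.

Variable r : nat.
Implicit Types (Q : {set P r}) (tau : {perm V r}) (a b c d : V r).

Definition part (k : bool) Q : {set V r} := [set a | side k a \in Q].

Definition quad (k : bool) a b c d : {set P r} := [set side k a; side k b; side k c; side k d].
Definition cross a c b d : {set P r} := [set inl a; inl c; inr b; inr d].

Definition code_block tau Q := (#|Q| == 4%N) && (indw Q \in Sc tau).

Lemma half_indw k Q : half k (indw Q) = indw (part k Q).
Proof. by apply/ffunP => a; rewrite !ffunE inE. Qed.

Lemma mem_Sc_indw tau Q : tau 0 = 0 ->
  (indw Q \in Sc tau) = [&& ~~ odd #|part true Q|, ~~ odd #|part false Q|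
                          & tau (\sum_(a in part true Q) a) == \sum_(b in part false Q) b].
Proof. by move=> tau0; rewrite mem_Sc // !half_indw !par_indw !syn_indw; do 2!case: odd. Qed.

Lemma card_parts Q : #|Q| = (#|part true Q| + #|part false Q|)%N.
Proof. by rewrite -!sum1_card big_sumType; congr (_ + _)%N; apply: eq_bigl => a; rewrite inE. Qed.

Lemma parts_cover Q : Q = side true @: part true Q :|: side false @: part false Q.
Proof.
apply/setP => p; rewrite inE; apply/idP/orP => [|[] /imsetP[a] //]; last first.
- by rewrite inE => + ->.
- by rewrite inE => + ->.
by case: p => a Qa; [left | right]; apply/imsetP; exists a; rewrite ?inE.
Qed.

Lemma part_quad k' k a b c d :
  part k' (quad k a b c d) = if k' == k then [set a; b; c; d] else set0.
Proof. by apply/setP => x; case: k; case: k'; rewrite !inE. Qed.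

Lemma part_cross_l a c b d : part true (cross a c b d) = [set a; c].
Proof. by apply/setP => x; rewrite !inE !orbF. Qed.

Lemma part_cross_r a c b d : part false (cross a c b d) = [set b; d].
Proof. by apply/setP => x; rewrite !inE. Qed.

Lemma side_inj k : injective (side (r := r) k).
Proof. by case: k => ? ? []. Qed.

Lemma perm_eq0 tau a : tau 0 = 0 -> (tau a == 0) = (a == 0).
Proof. by move=> tau0; rewrite -[X in _ == X]tau0 (inj_eq perm_inj). Qed.

Lemma code_block_quad tau k a b c d : tau 0 = 0 -> uniq [:: a; b; c; d] ->
  code_block tau (quad k a b c d) = (a + b + c + d == 0).
Proof.
move=> tau0 U; have Uk : uniq (map (side k) [:: a; b; c; d]).
  by rewrite (map_inj_uniq (@side_inj k)).
rewrite /code_block; have -> : #|quad k a b c d| = 4%N by rewrite card_set4.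
rewrite mem_Sc_indw // !part_quad.
by case: k {Uk}; rewrite /= card_set4 // sum_set4 // big_set0 cards0 /= ?perm_eq0 // tau0 eq_sym.
Qed.

Lemma code_block_cross tau a c b d : tau 0 = 0 -> a != c -> b != d ->
  code_block tau (cross a c b d) = (tau (a + c) == b + d).
Proof.
move=> tau0 ac bd; rewrite /code_block; have -> : #|cross a c b d| = 4%N.
  by rewrite card_set4 //= !inE !eqE /= orbF ac bd.
by rewrite mem_Sc_indw // part_cross_l part_cross_r !cards2 ac bd !sum_set2.
Qed.

Lemma quad_of_part k Q : #|Q| = 4%N -> #|part k Q| = 4%N ->
  exists a b c d, uniq [:: a; b; c; d] /\ Q = quad k a b c d.
Proof.
move=> Q4 k4; have PnotK : part (~~ k) Q = set0.
  apply/eqP; rewrite -cards_eq0; have := card_parts Q.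
  by case: k k4 => /= ->; rewrite Q4; lia.
have [a [b [c [d [U Ek]]]]] := card_set4P k4.
exists a, b, c, d; split => //; rewrite [LHS]parts_cover.
by case: k k4 Ek PnotK => /= _ -> ->; rewrite imset0 ?setU0 ?set0U !imsetU !imset_set1.
Qed.

Lemma even_split4 m n : (m + n = 4)%N -> ~~ odd m -> m != 4%N -> n != 4%N -> m = 2%N /\ n = 2%N.
Proof. by case: m => [|[|[|[|m]]]] //=; lia. Qed.

Lemma code_block_shape tau Q : tau 0 = 0 -> code_block tau Q ->
  (exists k a b c d, uniq [:: a; b; c; d] /\ Q = quad k a b c d) \/
  (exists a c b d, [/\ a != c, b != d & Q = cross a c b d]).
Proof.
move=> tau0 /andP[/eqP Q4]; rewrite mem_Sc_indw // => /and3P[evT _ _].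
have [T4|T4] := eqVneq #|part true Q| 4%N; first by left; exists true; exact: quad_of_part.
have [F4|F4] := eqVneq #|part false Q| 4%N; first by left; exists false; exact: quad_of_part.
have [/eqP/cards2P[a [c [ac ET]]] /eqP/cards2P[b [d [bd EF]]]] :=
  even_split4 (etrans (esym (card_parts Q)) Q4) evT T4 F4.
right; exists a, c, b, d; split => //; rewrite [LHS]parts_cover ET EF.
by rewrite !imsetU !imset_set1 /cross !setUA.
Qed.


Lemma mem_SQS tau Q : tau 0 = 0 -> (Q \in SQS tau) = code_block tau Q.
Proof.
move=> tau0; apply/idP/idP => [|blk].
  rewrite inE => /existsP[a /existsP[b /existsP[c /existsP[d]]]].
  case/orP => [/andP[+ /orP[]] | /andP[/andP[/eqP tac bd0] /eqP->]]; rewrite ?uniq4_andE.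
  - move=> /andP[U /eqP sum0] /eqP->.
    by have := code_block_quad true tau0 U; rewrite sum0 eqxx.
  - move=> /andP[U /eqP sum0] /eqP->.
    by have := code_block_quad false tau0 U; rewrite sum0 eqxx.
  have ac : a != c by apply: contra_neq bd0 => ac; rewrite -tac ac addvv_F2.
  by rewrite code_block_cross ?tac // -(char2_add_eq0 (@addvv_F2 _)).
rewrite inE; case: (code_block_shape tau0 blk).
  move=> [k [a [b [c [d [U EQ]]]]]]; move: blk; rewrite EQ code_block_quad // => sum0.
  apply/existsP; exists a; apply/existsP; exists b.
  apply/existsP; exists c; apply/existsP; exists d.
  by rewrite uniq4_andE U sum0; case: k {EQ}; rewrite /quad /= eqxx ?orbT.
move=> [a [c [b [d [ac bd EQ]]]]]; move: blk; rewrite EQ code_block_cross // => /eqP tac.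
apply/existsP; exists a; apply/existsP; exists b.
apply/existsP; exists c; apply/existsP; exists d.
by rewrite tac (char2_add_eq0 (@addvv_F2 _) b) bd !eqxx orbT.
Qed.

Lemma quad_SQS tau k a b c d : tau 0 = 0 -> uniq [:: a; b; c; d] ->
  (quad k a b c d \in SQS tau) = (a + b + c + d == 0).
Proof. by move=> tau0 U; rewrite mem_SQS // code_block_quad. Qed.

Lemma cross_SQS tau a c b d : tau 0 = 0 -> a != c -> b != d ->
  (cross a c b d \in SQS tau) = (tau (a + c) == b + d).
Proof. by move=> tau0 ac bd; rewrite mem_SQS // code_block_cross. Qed.

Lemma indw_SQS tau Q : tau 0 = 0 -> Q \in SQS tau -> indw Q \in Sc tau.
Proof. by move=> tau0; rewrite mem_SQS // => /andP[]. Qed.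

Lemma SQS_uniq tau (p q p' q' : P r) : tau 0 = 0 ->
  [set p; q; p'; q'] \in SQS tau -> uniq [:: p; q; p'; q'].
Proof. by move=> tau0; rewrite mem_SQS // => /andP[/eqP/uniq_set4]. Qed.

End Blocks.

Section CoordinatePermutations.

Variable r : nat.
Implicit Types (p q : {perm P r}) (c y : W2 r) (Q : {set P r}) (tau : {perm V r}).
Implicit Types (S : {set {set P r}}).

Lemma permwD p c y : permw p (c + y) = permw p c + permw p y.
Proof. by apply/ffunP => i; rewrite !ffunE. Qed.

Lemma permw0 p : permw p 0 = 0.
Proof. by apply/ffunP => i; rewrite !ffunE. Qed.

Lemma permwM p q c : permw (p * q) c = permw q (permw p c).
Proof. by apply/ffunP => i; rewrite !ffunE invMg permM. Qed.

Lemma permwK p : cancel (permw p) (permw p^-1).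
Proof. by move=> c; apply/ffunP => i; rewrite !ffunE invgK permK. Qed.

Lemma permwKV p : cancel (permw p^-1) (permw p).
Proof. by move=> c; apply/ffunP => i; rewrite !ffunE invgK permKV. Qed.

Lemma indw_imset p Q : indw (p @: Q) = permw p (indw Q).
Proof. by apply/ffunP => i; rewrite !ffunE mem_imset_perm. Qed.

Lemma mem_sqs_equiv p S1 S2 Q : sqs_equiv p S1 S2 -> (p @: Q \in S2) = (Q \in S1).
Proof.
move=> <-; apply/imsetP/idP => [[Q1 HQ1 /(imset_inj (@perm_inj _ p)) ->] // | HQ].
by exists Q.
Qed.

Lemma sqs_equivV p S1 S2 : sqs_equiv p S1 S2 -> sqs_equiv p^-1 S2 S1.
Proof.
move=> p_equiv; apply/setP => Q; apply/imsetP/idP => [[Q' HQ' ->] | HQ].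
  by rewrite -(mem_sqs_equiv _ p_equiv) imset_permKV.
by exists (p @: Q); rewrite ?imset_permK // (mem_sqs_equiv _ p_equiv).
Qed.

Lemma sqs_equivM p q S1 S2 S3 :
  sqs_equiv p S1 S2 -> sqs_equiv q S2 S3 -> sqs_equiv (p * q) S1 S3.
Proof.
move=> <- <-; rewrite /sqs_equiv -imset_comp; apply: eq_imset => Q /=.
by rewrite -imset_comp; apply: eq_imset => x; rewrite /= permM.
Qed.

Lemma code_block_permw p tau tau' Q :
  (forall c, (permw p c \in Sc tau') = (c \in Sc tau)) ->
  code_block tau' (p @: Q) = code_block tau Q.
Proof.
by move=> permSc; rewrite /code_block indw_imset permSc card_imset //; apply: perm_inj.
Qed.

Lemma sqs_equiv_of_code p tau tau' : tau 0 = 0 -> tau' 0 = 0 ->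
  (forall c, (permw p c \in Sc tau') = (c \in Sc tau)) ->
  sqs_equiv p (SQS tau) (SQS tau').
Proof.
move=> tau0 tau'0 permSc; apply/setP => Q'; apply/imsetP/idP => [[Q HQ ->] | HQ'].
  by rewrite mem_SQS // (code_block_permw _ permSc) -mem_SQS.
exists ((p^-1)%g @: Q'); last by rewrite imset_permKV.
by rewrite mem_SQS // -(code_block_permw _ permSc) imset_permKV -mem_SQS.
Qed.

End CoordinatePermutations.

Lemma Sc0 r (tau : {perm V r}) : tau 0 = 0 -> (0 : W2 r) \in Sc tau.
Proof.
move=> tau0; have -> : (0 : W2 r) = indw set0 by apply/ffunP => i; rewrite !ffunE inE.
rewrite mem_Sc_indw //; have part0 k : part k (set0 : {set P r}) = set0.
  by apply/setP => a; rewrite !inE.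
by rewrite !part0 cards0 !big_set0 tau0 eqxx.
Qed.

Lemma transitive_code_perm r (C C' : {set W2 r}) (x : W2 r) (pi : {perm P r}) :
  transitive_code C -> 0 \in C -> 0 \in C' ->
  [set x + permw pi y | y in C] = C' ->
  exists rho : {perm P r}, [set permw rho y | y in C] = C'.
Proof.
(* An automorphism sending 0 to the preimage of 0 absorbs the translation x. *)
move=> [G [autG trG]] C0 C'0 isoC.
have [y0 Cy0 xy0] : exists2 y0, y0 \in C & x + permw pi y0 = 0.
  by move: C'0; rewrite -isoC => /imsetP[y0 ? ->]; exists y0.
have [g Gg gy0] := atransP2 trG C0 Cy0.
have := subsetP autG g Gg; rewrite !inE => /andP[/existsP[x1 /existsP[s /forallP gE]] /eqP gC].
have {}gE y : g y = y0 + permw s y.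
  by have /eqP-> := gE y; congr (_ + _); rewrite gy0 /= /aperm (eqP (gE 0)) permw0 addr0.
exists (s * pi)%g; rewrite -isoC -[in RHS]gC -imset_comp; apply: eq_imset => y /=.
by rewrite gE permwD addrA xy0 add0r permwM.
Qed.

Section SwapHalves.

Variable r : nat.
Implicit Types (tau : {perm V r}) (c : W2 r).

Definition swap_pos (p : P r) : P r := match p with inl a => inr a | inr a => inl a end.

Lemma swap_posK : involutive swap_pos.
Proof. by case. Qed.

Definition swap_halves : {perm P r} := perm (inv_inj swap_posK).

Lemma swap_halves_side k a : swap_halves (side k a) = side (~~ k) a.
Proof. by rewrite permE; case: k. Qed.

Lemma swap_halvesV_side k a : (swap_halves^-1)%g (side k a) = side (~~ k) a.
Proof. by apply: (@perm_inj _ swap_halves); rewrite permKV swap_halves_side negbK. Qed.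

Lemma half_swap_halves k c : half k (permw swap_halves c) = half (~~ k) c.
Proof. by apply/ffunP => a; rewrite !ffunE swap_halvesV_side. Qed.

Lemma permV0 tau : tau 0 = 0 -> (tau^-1)%g 0 = 0.
Proof. by move=> tau0; rewrite -{1}tau0 permK. Qed.

Lemma mem_Sc_swap_halves tau c : tau 0 = 0 -> (permw swap_halves c \in Sc tau^-1) = (c \in Sc tau).
Proof.
move=> tau0; rewrite !mem_Sc ?permV0 // !half_swap_halves /= andbCA; congr [&& _, _ & _].
by rewrite -[X in _ == X](permK tau) (inj_eq perm_inj) eq_sym.
Qed.

Lemma sqs_equiv_swap_halves tau : tau 0 = 0 -> sqs_equiv swap_halves (SQS tau) (SQS tau^-1).
Proof.
by move=> tau0; apply: sqs_equiv_of_code; rewrite ?permV0 // => c; apply: mem_Sc_swap_halves.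
Qed.

End SwapHalves.

Arguments swap_halves {r}.

Lemma half_of_swap_halves r (p : P r) : half_of (swap_halves p) = ~~ half_of p.
Proof. by rewrite permE; case: p. Qed.

Section SideMaps.

Variables (r : nat) (tau tau' : {perm V r}) (rho : {perm P r}) (s : bool -> V r -> V r).
Hypotheses (tau0 : tau 0 = 0) (tau'0 : tau' 0 = 0).
Hypothesis rho_equiv : sqs_equiv rho (SQS tau) (SQS tau').
Hypothesis rho_side : forall k a, rho (side k a) = side k (s k a).

Lemma side_map_inj k : injective (s k).
Proof. by move=> a b /(congr1 (side k)); rewrite -!rho_side => /perm_inj/side_inj. Qed.

Lemma side_map_affine k a b :
  s k (a + b) + s k 0 = (s k a + s k 0) + (s k b + s k 0).
Proof.
apply: (affine_of_quads (@addvv_F2 _) (@addvv_F2 _)) => {}a {}b a0 b0 ab.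
have U := uniq_0_ab a0 b0 ab.
have Us : uniq (map (s k) [:: 0; a; b; a + b]) by rewrite map_inj_uniq //; exact: side_map_inj.
have : quad k 0 a b (a + b) \in SQS tau by rewrite quad_SQS // add0r addvv_F2.
rewrite -(mem_sqs_equiv _ rho_equiv) imset_set4 !rho_side -/(quad k _ _ _ _).
by rewrite quad_SQS // => /eqP.
Qed.

Lemma side_map_tau x : tau' (s true x + s true 0) = s false (tau x) + s false 0.
Proof.
have [->|x0] := eqVneq x 0; first by rewrite tau0 !addvv_F2.
have neq0 k y : y != 0 -> s k y != s k 0 by rewrite (inj_eq (@side_map_inj k)).
have : cross x 0 (tau x) 0 \in SQS tau by rewrite cross_SQS ?perm_eq0 // !addr0.
rewrite -(mem_sqs_equiv _ rho_equiv) imset_set4 !(rho_side true) !(rho_side false).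
by rewrite -/(cross _ _ _ _) cross_SQS ?neq0 ?perm_eq0 // => /eqP.
Qed.

Lemma sum_half_side_map (R : nmodType) (F : V r -> 'F_2 -> R) k (c : W2 r) :
  \sum_b F b (half k (permw rho c) b) = \sum_a F (s k a) (half k c a).
Proof.
rewrite (reindex_inj (@side_map_inj k)); apply: eq_bigr => a _.
by rewrite !ffunE -rho_side permK.
Qed.

Lemma Sc_permw_side_map c : c \in Sc tau -> permw rho c \in Sc tau'.
Proof.
rewrite !mem_Sc // => /and3P[/eqP pT /eqP pF /eqP sTF].
have par_half k : par (half k (permw rho c)) = par (half k c).
  exact: (sum_half_side_map (fun _ v => v)).
have syn_half k : par (half k c) = 0 ->
    syn (half k (permw rho c)) = s k (syn (half k c)) + s k 0.
  move=> pk; rewrite -sum_affine //; last exact: side_map_affine.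
  exact: (sum_half_side_map (fun b v => v *: b)).
by rewrite !par_half pT pF !syn_half // -sTF side_map_tau !eqxx.
Qed.

End SideMaps.

Section HalfStructure.

Variables (r : nat) (rho : {perm P r}).

Lemma half_preserving_right :
  (forall a, half_of (rho (inl a))) -> forall b, ~~ half_of (rho (inr b)).
Proof.
move=> left_left b; apply/negP => rb; set L := [set p : P r | half_of p].
have sub : rho @: L \subset L.
  apply/subsetP => p /imsetP[x]; rewrite inE; case: x => // a _ ->.
  by rewrite inE; exact: left_left.
have eqL : rho @: L = L by apply/eqP; rewrite eqEcard sub (card_imset _ (@perm_inj _ rho)) leqnn.
have : rho (inr b) \in rho @: L by rewrite eqL inE.
by rewrite mem_imset ?inE //; apply: perm_inj.
Qed.

Lemma half_preserving_coords : (forall a, half_of (rho (inl a))) ->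
  exists s : bool -> V r -> V r, forall k a, rho (side k a) = side k (s k a).
Proof.
move=> left_left; pose coord (p : P r) := match p with inl a => a | inr a => a end.
exists (fun k a => coord (rho (side k a))) => -[] a /=.
  by move: (left_left a); case: (rho (inl a)).
by move: (half_preserving_right left_left a); case: (rho (inr a)).
Qed.

End HalfStructure.

Lemma Sc_permw_of_half_preserving r (tau tau' : {perm V r}) (rho : {perm P r}) :
  tau 0 = 0 -> tau' 0 = 0 -> sqs_equiv rho (SQS tau) (SQS tau') ->
  (forall a, half_of (rho (inl a))) -> forall c, c \in Sc tau -> permw rho c \in Sc tau'.
Proof.
move=> tau0 tau'0 rho_equiv /half_preserving_coords[s rho_side].
exact: Sc_permw_side_map rho_equiv rho_side.
Qed.

Section Colourings.

Variable r : nat.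
Implicit Types (S : {set {set P r}}) (z : P r -> bool) (tau : {perm V r}) (rho : {perm P r}).

Definition even_colouring S z := forall Q, Q \in S -> \sum_(p in Q) (z p)%:R = 0 :> 'F_2.

Definition parallel_colouring S z := forall p q p' q' u v,
  z p -> z q -> ~~ z p' -> ~~ z q' -> z u -> z v ->
  [set p; q; p'; q'] \in S -> [set p; q; u; v] \in S -> [set u; v; p'; q'] \in S.

Lemma even_colouring_equiv rho S1 S2 z :
  sqs_equiv rho S1 S2 -> even_colouring S2 z -> even_colouring S1 (z \o rho).
Proof.
move=> rho_equiv zeven Q; rewrite -(mem_sqs_equiv _ rho_equiv) => /zeven.
by rewrite big_imset //; apply: in2W; apply: perm_inj.
Qed.

Lemma parallel_colouring_equiv rho S1 S2 z :
  sqs_equiv rho S1 S2 -> parallel_colouring S2 z -> parallel_colouring S1 (z \o rho).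
Proof.
move=> rho_equiv zpar p q p' q' u v zp zq zp' zq' zu zv B1 B2.
rewrite -(mem_sqs_equiv _ rho_equiv) imset_set4.
by apply: (zpar (rho p) (rho q)); rewrite // -(imset_set4 rho) (mem_sqs_equiv _ rho_equiv).
Qed.

Lemma even_half_of tau : tau 0 = 0 -> even_colouring (SQS tau) (@half_of r).
Proof.
move=> tau0 Q; rewrite mem_SQS // => /andP[_]; rewrite mem_Sc_indw // => /and3P[evT _ _].
rewrite big_sumType /= [X in _ + X]big1 // addr0.
have -> : \sum_(a | inl a \in Q) (1 : 'F_2) = \sum_(a in part true Q) 1.
  by apply: eq_bigl => a; rewrite inE.
by rewrite sumr_const natr_F2 (negbTE evT).
Qed.

Lemma parallel_half_of tau : tau 0 = 0 -> parallel_colouring (SQS tau) (@half_of r).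
Proof.
move=> tau0 [a|//] [c|//] [//|b] [//|d] [u|//] [v|//] _ _ _ _ _ _ B1 B2.
have := SQS_uniq tau0 B1; rewrite uniq_cross => /andP[ac bd].
have U : uniq [:: a; c; u; v].
  by rewrite -(map_inj_uniq (@inl_inj _ (V r))); apply: SQS_uniq B2.
move: B1 B2; rewrite -/(cross a c b d) -/(quad true a c u v) cross_SQS // quad_SQS //.
move=> /eqP tac; rewrite -addrA (char2_add_eq0 (@addvv_F2 _)) => /eqP acuv.
have uv : u != v by move: U; rewrite /= !inE => /and4P[].
by rewrite -/(cross u v b d) cross_SQS // -acuv tac.
Qed.

End Colourings.

Section AdditiveFromColouring.

Variables (r : nat) (tau : {perm V r}) (z : P r -> bool) (a1 a2 : V r).
Hypotheses (tau0 : tau 0 = 0) (z_even : even_colouring (SQS tau) z).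
Hypotheses (z_par : parallel_colouring (SQS tau) z) (za1 : z (inl a1)) (za2 : ~~ z (inl a2)).

Definition colour_diff k (x : V r) : 'F_2 := (z (side k x))%:R + (z (side k 0))%:R.

Lemma colour_diffD k : {morph colour_diff k : x y / x + y}.
Proof.
move=> x y; rewrite /colour_diff.
apply: (affine_of_quads (@addvv_F2 _) addxx_F2 (f := fun x => (z (side k x))%:R)).
move=> {x y} a b a0 b0 ab.
have U : uniq (map (side k) [:: 0; a; b; a + b]).
  by rewrite (map_inj_uniq (@side_inj _ k)) uniq_0_ab.
have B : quad k 0 a b (a + b) \in SQS tau by rewrite quad_SQS ?uniq_0_ab // add0r addvv_F2.
by have := z_even B; rewrite sum_set4.
Qed.

Lemma colour_shift k a x : (z (side k (a + x)))%:R = (z (side k a))%:R + colour_diff k x :> 'F_2.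
Proof.
apply: (@addIr _ (z (side k 0))%:R); have := colour_diffD k a x.
by rewrite /colour_diff => ->; rewrite addrAC.
Qed.

Lemma colour_diff_tau x : colour_diff true x = colour_diff false (tau x).
Proof.
have [->|x0] := eqVneq x 0; first by rewrite tau0 /colour_diff !addxx_F2.
have B : cross x 0 (tau x) 0 \in SQS tau by rewrite cross_SQS ?perm_eq0 // !addr0.
have := z_even B; rewrite sum_set4; last exact: SQS_uniq B.
by rewrite -addrA => /eqP; rewrite (char2_add_eq0 addxx_F2) => /eqP.
Qed.

Lemma colour_diff_a1a2 : colour_diff true (a1 + a2) = 1.
Proof.
by rewrite colour_diffD /colour_diff /= za1 (negbTE za2) addrACA addxx_F2 addr0 addr0.
Qed.

Lemma right_coloured : exists b1, z (inr b1).
Proof.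
have := colour_diff_tau (a1 + a2); rewrite colour_diff_a1a2 /colour_diff /=.
case zt: (z (inr (tau (a1 + a2)))); first by exists (tau (a1 + a2)).
by case z0: (z (inr 0)) => // _; exists 0.
Qed.

Lemma colour_split s t :
  colour_diff true s = 1 -> colour_diff true t = 0 -> tau (s + t) = tau s + tau t.
Proof.
move=> cds cdt; have [b1 zb1] := right_coloured.
have [->|t0] := eqVneq t 0; first by rewrite tau0 !addr0.
have one_neq0 : (1 : 'F_2) <> 0 by move/eqP; rewrite oner_eq0.
have s0 : s != 0 by apply: contra_not_neq one_neq0 => s0; rewrite -cds s0 /colour_diff addxx_F2.
have ts : t != s by apply: contra_not_neq one_neq0 => ts; rewrite -cds -ts cdt.
have shift_neq (a x : V r) : x != 0 -> a + x != a.
  by move=> x0; rewrite -[X in _ != X]addr0 (inj_eq (addrI a)).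
have cdsF : colour_diff false (tau s) = 1 by rewrite -colour_diff_tau.
have cdtF : colour_diff false (tau t) = 0 by rewrite -colour_diff_tau.
have zs : z (inl (a1 + s)) = false.
  by apply: natrF2_inj; rewrite (colour_shift true) za1 cds addxx_F2.
have zts : z (inr (b1 + tau s)) = false.
  by apply: natrF2_inj; rewrite (colour_shift false) zb1 cdsF addxx_F2.
have zt : z (inl (a1 + t)) by apply: natrF2_inj; rewrite (colour_shift true) za1 cdt addr0.
have ztt : z (inr (b1 + tau t)) by apply: natrF2_inj; rewrite (colour_shift false) zb1 cdtF addr0.
have B x : x != 0 -> [set inl a1; inr b1; inl (a1 + x); inr (b1 + tau x)] \in SQS tau.
  move=> x0; rewrite set4C23 -/(cross _ _ _ _) cross_SQS //; last 2 first.
  - by rewrite eq_sym shift_neq.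
  - by rewrite eq_sym shift_neq ?perm_eq0.
  by rewrite !(char2_addKr (@addvv_F2 _)).
(* The parallel property trades the colour-1 pair {inl a1, inr b1} of B s for that of B t. *)
have := z_par za1 zb1 (negbT zs) (negbT zts) zt ztt (B s s0) (B t t0).
rewrite set4C23 -/(cross _ _ _ _) cross_SQS //; last 2 first.
- by rewrite (inj_eq (addrI a1)).
- by rewrite (inj_eq (addrI b1)) (inj_eq perm_inj).
by rewrite (addrACA a1) (addrACA b1) !addvv_F2 !add0r => /eqP; rewrite addrC => ->; rewrite addrC.
Qed.

Lemma additive_of_colouring : {morph tau : x y / x + y}.
Proof.
apply: (additive_of_split (@addvv_F2 _) (@addvv_F2 _) (@colour_diffD true)) colour_split.
by exists (a1 + a2); apply: colour_diff_a1a2.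
Qed.

End AdditiveFromColouring.

Lemma mixed_halves_inv r (rho : {perm P r}) a1 a2 :
  half_of (rho (inl a1)) -> ~~ half_of (rho (inl a2)) ->
  exists b1 b2, half_of ((rho^-1)%g (inl b1)) /\ ~~ half_of ((rho^-1)%g (inl b2)).
Proof.
move=> ra1 ra2.
have [b1 E1] : exists b1, rho (inl a1) = inl b1.
  by move: ra1; case: (rho (inl a1)) => // b1; exists b1.
have [b2 E2] : exists b2, rho (inl a2) = inr b2.
  by move: ra2; case: (rho (inl a2)) => // b2; exists b2.
have [all_left | /existsP[b2' rb2']] := boolP [forall b, half_of ((rho^-1)%g (inl b))].
  have := @half_preserving_right _ (rho^-1)%g (fun b => forallP all_left b) b2.
  by rewrite -E2 permK.
by exists b1, b2'; rewrite -E1 permK.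
Qed.

Lemma additive_of_mixed_equiv r (tau tau' : {perm V r}) (rho : {perm P r}) a1 a2 :
  tau 0 = 0 -> tau' 0 = 0 -> sqs_equiv rho (SQS tau) (SQS tau') ->
  half_of (rho (inl a1)) -> ~~ half_of (rho (inl a2)) -> {morph tau : x y / x + y}.
Proof.
move=> tau0 tau'0 rho_equiv ra1 ra2.
apply: (additive_of_colouring (z := @half_of r \o rho) tau0 _ _ ra1 ra2).
  exact: even_colouring_equiv rho_equiv (even_half_of tau'0).
exact: parallel_colouring_equiv rho_equiv (parallel_half_of tau'0).
Qed.

Section WeightReduction.

Variables (r : nat) (tau : {perm V r}).
Hypothesis tau0 : tau 0 = 0.
Implicit Types (c : W2 r) (a b e : V r).

Lemma quad_reduces_weight c k : (3 <= #|part k (supp c)|)%N ->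
  exists2 Q, Q \in SQS tau & (#|supp (c + indw Q)%R| < #|supp c|)%N.
Proof.
case/pick3 => a [b [e [U sub]]]; have U4 := uniq_abe U.
exists (quad k a b e (a + b + e)); first by rewrite quad_SQS // addvv_F2.
apply: (weight_add_quad (p1 := side k a) (p2 := side k b) (p3 := side k e)).
- by apply: card_set4; apply: etrans (map_inj_uniq (@side_inj _ k) _) U4.
- exact: etrans (map_inj_uniq (@side_inj _ k) _) U.
have inS x : x \in [:: a; b; e] -> c (side k x) != 0 by move/sub; rewrite !inE.
by move=> p; rewrite !inE => /or3P[] /eqP->; rewrite eqxx ?orbT andbT inS // !inE eqxx ?orbT.
Qed.

Lemma cross_reduces_weight c a e b : a != e -> [set a; e] \subset part true (supp c) ->
  b \in part false (supp c) ->
  exists2 Q, Q \in SQS tau & (#|supp (c + indw Q)%R| < #|supp c|)%N.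
Proof.
move=> ae /subsetP sub cb; have bneq : b != b + tau (a + e).
  rewrite -[X in X != _]addr0 (inj_eq (addrI b)) eq_sym perm_eq0 //.
  by rewrite (char2_add_eq0 (@addvv_F2 _)).
exists (cross a e b (b + tau (a + e))).
  by rewrite cross_SQS // (char2_addKr (@addvv_F2 _)).
apply: (weight_add_quad (p1 := inl a) (p2 := inl e) (p3 := inr b)).
- by rewrite card_set4 // uniq_cross ae.
- by rewrite /= !inE !eqE /= orbF andbT.
have ca : c (inl a) != 0 by have := sub a; rewrite !inE eqxx => /(_ isT).
have ce : c (inl e) != 0 by have := sub e; rewrite !inE eqxx orbT => /(_ isT).
have cb' : c (inr b) != 0 by move: cb; rewrite !inE.
by move=> p; rewrite !inE => /or3P[] /eqP->; rewrite !eqxx ?orbT ?andbT.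
Qed.

Lemma small_even_set (A : {set V r}) : (#|A| < 3)%N -> ~~ odd #|A| ->
  A = set0 \/ exists a e, a != e /\ A = [set a; e].
Proof.
move=> lt3 ev; have [/eqP/cards2P | ne2] := eqVneq #|A| 2; first by right.
by left; apply/eqP; rewrite -cards_eq0; move: lt3 ev ne2; case: #|A| => [|[|[|]]].
Qed.

Lemma SQS_reduces_weight c : c \in Sc tau -> c != 0 ->
  exists2 Q, Q \in SQS tau & (#|supp (c + indw Q)%R| < #|supp c|)%N.
Proof.
move=> Hc c0; set S := supp c.
have [T3|T3] := leqP 3 #|part true S|; first exact: quad_reduces_weight T3.
have [F3|F3] := leqP 3 #|part false S|; first exact: quad_reduces_weight F3.
move: Hc; rewrite -{1}(indw_supp c) mem_Sc_indw // -/S => /and3P[evT evF /eqP sums].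
have addF2_eq0 := char2_add_eq0 (@addvv_F2 (V r)).
case: (small_even_set T3 evT) => [T0 | [a [e [ae ET]]]].
  move: sums; rewrite T0 big_set0 tau0.
  case: (small_even_set F3 evF) => [F0 _ | [b [d [bd ->]]]]; last first.
    by rewrite sum_set2 // => /eqP; rewrite eq_sym addF2_eq0 (negbTE bd).
  suff c_eq0 : c = 0 by rewrite c_eq0 eqxx in c0.
  rewrite -(indw_supp c) -/S [S]parts_cover T0 F0 !imset0 setU0.
  by apply/ffunP => i; rewrite !ffunE inE.
case: (set_0Vmem (part false S)) => [F0 | [b Fb]].
  move: sums; rewrite ET F0 big_set0 sum_set2 // => /eqP.
  by rewrite perm_eq0 // addF2_eq0 (negbTE ae).
by apply: (cross_reduces_weight ae _ Fb); rewrite ET.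
Qed.

End WeightReduction.

Lemma Sc_add r (tau : {perm V r}) (c c' : W2 r) : tau 0 = 0 -> {morph tau : x y / x + y} ->
  c \in Sc tau -> c' \in Sc tau -> c + c' \in Sc tau.
Proof.
move=> tau0 tauD; have half_add k : half k (c + c') = half k c + half k c'.
  by apply/ffunP => a; rewrite !ffunE.
rewrite !mem_Sc // !half_add !parD !synD tauD.
by move=> /and3P[/eqP-> /eqP-> /eqP->] /and3P[/eqP-> /eqP-> /eqP->]; rewrite addr0 !eqxx.
Qed.

Lemma Sc_permw_additive r (tau tau' : {perm V r}) (rho : {perm P r}) :
  tau 0 = 0 -> tau' 0 = 0 -> {morph tau : x y / x + y} -> {morph tau' : x y / x + y} ->
  sqs_equiv rho (SQS tau) (SQS tau') -> forall c, c \in Sc tau -> permw rho c \in Sc tau'.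
Proof.
move=> tau0 tau'0 tauD tau'D rho_equiv c; have [n] := ubnP #|supp c|.
elim: n c => // n IHn c lt_n Hc; have [->|c0] := eqVneq c 0; first by rewrite permw0 Sc0.
have [Q HQ ltQ] := SQS_reduces_weight tau0 Hc c0.
have -> : c = (c + indw Q) + indw Q by rewrite -addrA addww_F2 addr0.
rewrite permwD -indw_imset.
apply: Sc_add => //; last by apply: indw_SQS; rewrite // (mem_sqs_equiv _ rho_equiv).
by apply: IHn; [lia | apply: Sc_add => //; apply: indw_SQS].
Qed.

Lemma Sc_permw_of_sqs_equiv r (tau tau' : {perm V r}) (rho : {perm P r}) :
  tau 0 = 0 -> tau' 0 = 0 -> sqs_equiv rho (SQS tau) (SQS tau') ->
  forall c, c \in Sc tau -> permw rho c \in Sc tau'.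
Proof.
move=> tau0 tau'0 rho_equiv.
have [left_left|not_ll] := boolP [forall a, half_of (rho (inl a))].
  exact: Sc_permw_of_half_preserving rho_equiv (fun a => forallP left_left a).
have [left_right|not_lr] := boolP [forall a, ~~ half_of (rho (inl a))].
  move=> c Hc; rewrite -(mem_Sc_swap_halves _ tau'0) -permwM.
  have swap_equiv := sqs_equivM rho_equiv (sqs_equiv_swap_halves tau'0).
  apply: Sc_permw_of_half_preserving swap_equiv _ _ Hc => //.
    exact: permV0.
  by move=> a; rewrite permM half_of_swap_halves (forallP left_right).
rewrite !negb_forall in not_ll not_lr.
have [a2 ra2] := existsP not_ll; have [a1 /negPn ra1] := existsP not_lr.
have [b1 [b2 [rb1 rb2]]] := mixed_halves_inv ra1 ra2.
apply: (Sc_permw_additive _ _ _ _ rho_equiv) => //.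
  exact: additive_of_mixed_equiv tau0 tau'0 rho_equiv ra1 ra2.
exact: additive_of_mixed_equiv tau'0 tau0 (sqs_equivV rho_equiv) rb1 rb2.
Qed.

Lemma Sc_image_of_sqs_equiv r (tau tau' : {perm V r}) (rho : {perm P r}) :
  tau 0 = 0 -> tau' 0 = 0 -> sqs_equiv rho (SQS tau) (SQS tau') ->
  [set permw rho y | y in Sc tau] = Sc tau'.
Proof.
move=> tau0 tau'0 rho_equiv; apply/setP => c; apply/imsetP/idP => [[y Hy ->] | Hc].
  exact: Sc_permw_of_sqs_equiv rho_equiv y Hy.
exists (permw (rho^-1)%g c); last by rewrite permwKV.
exact: Sc_permw_of_sqs_equiv (sqs_equivV rho_equiv) c Hc.
Qed.

Theorem corollary3 (r : nat) (tau tau' : {perm V r}) :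
  (1 <= r)%N -> tau 0 = 0 -> tau' 0 = 0 ->
  transitive_code (Sc tau) -> transitive_code (Sc tau') ->
  (exists (x : W2 r) (pi : {perm P r}), [set x + permw pi y | y in Sc tau] = Sc tau')
  <-> (exists pi' : {perm P r}, sqs_equiv pi' (SQS tau) (SQS tau')).
Proof.
move=> _ tau0 tau'0 trans _; split.
  case=> x [pi isoC]; have [rho codeE] := transitive_code_perm trans (Sc0 tau0) (Sc0 tau'0) isoC.
  exists rho; apply: sqs_equiv_of_code => // c.
  by rewrite -codeE mem_imset //; apply: can_inj (permwK rho).
case=> rho rho_equiv; exists 0, rho; rewrite -(Sc_image_of_sqs_equiv tau0 tau'0 rho_equiv).
by apply: eq_imset => y; rewrite add0r.
Qed.
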